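(* Let $\mathcal{C}$ be a Fraïssé class of rigid finite structures over a finite relational language with Fraïssé limit $M$, and let $A_0\in\mathcal{C}$ be a $2$-element structure. Let $D$ be a directed graph on the domain of $M$ defined by a parameter-free first-order formula $\varphi(x,y)$ such that for every pair $\{x,y\}$ of distinct elements inducing a copy of $A_0$ exactly one of $\varphi(x,y),\varphi(y,x)$ holds, and $D$ has no other arcs. If $D$ contains a directed cycle, then with $A=A_0$ and $B$ the substructure of $M$ induced on the vertex set of that cycle, for every $C\in\mathcal{C}$ there is a $2$-colouring of the embeddings $A\to C$ with no monochromatic embedding $B\to C$; in particular $\mathcal{C}$ is not a Ramsey class.
   Context: A Fraïssé class is a class of finite non-empty structures closed under isomorphism and induced substructures with the joint embedding and amalgamation properties; its Fraïssé limit is the unique countable homogeneous structure whose age is the class. Rigid: trivial automorphism group. Since members of $\mathcal{C}$ embed in $M$ and $\varphi$ is preserved by isomorphisms between finite substructures (by homogeneity), $\varphi$ determines a direction on each copy of $A_0$ in any $C\in\mathcal{C}$. An embedding $g:B\to C$ is monochromatic for a colouring of embeddings $A\to C$ if all embeddings $A\to C$ with image inside $g(B)$ have the same colour. Ramsey class: for all $A,B$ in the class there is $C$ such that every $2$-colouring of embeddings $A\to C$ admits a monochromatic embedding $B\to C$. *)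

From mathcomp Require Import all_boot.
Set Implicit Arguments. Unset Strict Implicit. Unset Printing Implicit Defensive.

Record language := Language { sym : finType; arity : sym -> nat }.

Definition structure (L : language) (T : Type) :=
  forall s : sym L, ('I_(arity s) -> T) -> Prop.

Record finstruct (L : language) := FinStruct {
  fcar : finType;
  fint : structure L fcar }.
Arguments fcar {L} _.
Arguments fint {L} _.

Definition is_emb (L : language) (T1 T2 : Type)
  (I1 : structure L T1) (I2 : structure L T2) (f : T1 -> T2) : Prop :=
  injective f /\ forall (s : sym L) (t : 'I_(arity s) -> T1), I1 s t <-> I2 s (f \o t).

Definition femb (L : language) (A B : finstruct L) (f : fcar A -> fcar B) :=
  @is_emb L (fcar A) (fcar B) (@fint L A) (@fint L B) f.

Definition fclass (L : language) := finstruct L -> Prop.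

Definition rigid (L : language) (A : finstruct L) : Prop :=
  forall f : fcar A -> fcar A, femb f -> bijective f -> forall a, f a = a.

(* Fraisse class: non-empty members, non-empty class, closed under isomorphism
   and induced substructures (= embedded non-empty structures), JEP and AP. *)
Definition fraisse_class (L : language) (C : fclass L) : Prop :=
  (exists A, C A) /\ (forall A, C A -> 0 < #|fcar A|) /\
  [/\
      forall A B (f : fcar A -> fcar B), C A -> femb f -> bijective f -> C B,
      forall A B (f : fcar A -> fcar B), C B -> 0 < #|fcar A| -> femb f -> C A,
      (forall A B, C A -> C B -> exists E, C E /\
          (exists f : fcar A -> fcar E, femb f) /\ (exists g : fcar B -> fcar E, femb g))
    & forall A B1 B2 (f1 : fcar A -> fcar B1) (f2 : fcar A -> fcar B2),
        C A -> C B1 -> C B2 -> femb f1 -> femb f2 ->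
        exists E (g1 : fcar B1 -> fcar E) (g2 : fcar B2 -> fcar E),
          [/\ C E, femb g1, femb g2 & forall a, g1 (f1 a) = g2 (f2 a)]].

(* M (countable carrier) is homogeneous: every isomorphism between finite
   substructures (equivalently, any two embeddings of a finite structure)
   extends to an automorphism. *)
Definition homogeneous (L : language) (TM : Type) (IM : structure L TM) : Prop :=
  forall (A : finstruct L) (f g : fcar A -> TM),
    is_emb (fint A) IM f -> is_emb (fint A) IM g ->
    exists sigma : TM -> TM,
      [/\ is_emb IM IM sigma, bijective sigma & forall a, sigma (f a) = g a].

Definition age_is (L : language) (TM : Type) (IM : structure L TM) (C : fclass L) :=
  forall A : finstruct L,
    C A <-> (0 < #|fcar A| /\ exists f : fcar A -> TM, is_emb (fint A) IM f).

Definition fraisse_limit (L : language) (TM : countType) (IM : structure L TM)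
  (C : fclass L) : Prop := homogeneous IM /\ age_is IM C.

Inductive formula (L : language) :=
  | FRel (s : sym L) of ('I_(arity s) -> nat)
  | FEq of nat & nat
  | FNeg of formula L
  | FAnd of formula L & formula L
  | FOr of formula L & formula L
  | FEx of nat & formula L
  | FAll of nat & formula L.

Fixpoint sat (L : language) (T : Type) (I : structure L T) (v : nat -> T)
  (phi : formula L) {struct phi} : Prop :=
  match phi with
  | FRel s vs => I s (fun i => v (vs i))
  | FEq i j => v i = v j
  | FNeg p => ~ sat I v p
  | FAnd p q => sat I v p /\ sat I v q
  | FOr p q => sat I v p \/ sat I v q
  | FEx n p => exists x : T, sat I (fun m => if m == n then x else v m) p
  | FAll n p => forall x : T, sat I (fun m => if m == n then x else v m) p
  end.

Definition defined_rel (L : language) (T : Type) (I : structure L T)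
  (phi : formula L) (x y : T) : Prop :=
  sat I (fun n => if n == 0 then x else y) phi.

Definition induces_copy (L : language) (T : Type) (I : structure L T)
  (A0 : finstruct L) (x y : T) : Prop :=
  exists e : fcar A0 -> T, is_emb (fint A0) I e /\
    (forall a, e a = x \/ e a = y) /\ (exists a, e a = x) /\ (exists a, e a = y).

Definition induced (L : language) (T : choiceType) (I : structure L T) (s : seq T)
  : finstruct L :=
  @FinStruct L (seq_sub s) (fun r t => I r (fun i => val (t i))).

Definition monochromatic (L : language) (A B E : finstruct L)
  (c : (fcar A -> fcar E) -> bool) (g : fcar B -> fcar E) : Prop :=
  exists col : bool, forall e : fcar A -> fcar E, femb e ->
    (forall a, exists b, e a = g b) -> c e = col.

Definition ramsey_class (L : language) (C : fclass L) : Prop :=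
  forall A B, C A -> C B -> exists E, C E /\
    forall c : (fcar A -> fcar E) -> bool,
      exists g : fcar B -> fcar E, femb g /\ monochromatic c g.

(* A directed cycle of D cannot be oriented monotonically along a linear order.
   Fix a linear order on a finite structure E and colour an embedding e of A0 by
   whether e maps the tail a0 of a reference arc below its head a1.  Since phi
   is preserved by automorphisms of the homogeneous structure M, every arc x -> y
   of D is the image of an embedding sending a0 to x and a1 to y.  Composing
   these with an embedding g of the cycle into E, a monochromatic g would make
   the positions of the images of the cycle vertices strictly monotone all the
   way around the cycle, which is impossible. *)
From mathcomp Require Import all_boot.
From Stdlib Require Import FunctionalExtensionality.

Set Implicit Arguments.
Unset Strict Implicit.
Unset Printing Implicit Defensive.

Lemma ordS_cycle_not_monotone k (i0 : 'I_k) (r : 'I_k -> nat) (b : bool) :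
  (forall j, r j != r (ordS j)) -> ~ forall j, (r j < r (ordS j)) = b.
Proof.
move=> r_neq r_mono; case: b r_mono => r_mono.
- case: (@arg_maxnP _ i0 xpredT r erefl) => j _ j_max.
  by have /= := j_max (ordS j) erefl; rewrite leqNgt r_mono.
- case: (@arg_minnP _ i0 xpredT r erefl) => j _ j_min.
  have /= := j_min (ordS j) erefl.
  by rewrite leq_eqVlt r_mono orbF (negbTE (r_neq j)).
Qed.

Section Embeddings.

Variable L : language.

Lemma is_emb_comp (T1 T2 T3 : Type) (I1 : structure L T1) (I2 : structure L T2)
    (I3 : structure L T3) (f : T1 -> T2) (g : T2 -> T3) :
  is_emb I1 I2 f -> is_emb I2 I3 g -> is_emb I1 I3 (g \o f).
Proof.
move=> [f_inj f_rel] [g_inj g_rel]; split; first exact: inj_comp.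
by move=> s t; apply: iff_trans (f_rel s t) (g_rel s (f \o t)).
Qed.

Lemma induced_val_emb (T : choiceType) (I : structure L T) (s : seq T) :
  is_emb (fint (induced I s)) I val.
Proof. by split; [exact: val_inj | move=> r t; split]. Qed.

Definition induced_corestr (T : choiceType) (I : structure L T) (s : seq T)
    (A : finstruct L) (e : fcar A -> T) (e_s : forall a, e a \in s) :
    fcar A -> fcar (induced I s) :=
  fun a => SeqSub (e_s a).

Lemma induced_corestr_emb (T : choiceType) (I : structure L T) (s : seq T)
    (A : finstruct L) (e : fcar A -> T) (e_s : forall a, e a \in s) :
  is_emb (fint A) I e -> femb (induced_corestr I e_s).
Proof.
move=> [e_inj e_rel]; split; last exact: e_rel.
by move=> a a' /(congr1 val); apply: e_inj.
Qed.

Lemma induced_in_age (T : countType) (I : structure L T) (C : fclass L)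
    (s : seq T) (x : T) :
  age_is I C -> x \in s -> C (induced I s).
Proof.
move=> age xs; apply/age; split; first by apply/card_gt0P; exists (SeqSub xs).
by exists val; apply: induced_val_emb.
Qed.

Definition orient_colour (A E : finstruct L) (a0 a1 : fcar A)
    (e : fcar A -> fcar E) : bool :=
  enum_rank (e a0) < enum_rank (e a1).

Lemma not_ramsey_class (C : fclass L) (A B : finstruct L) :
  C A -> C B ->
  (forall E, C E -> exists c : (fcar A -> fcar E) -> bool,
     forall g : fcar B -> fcar E, femb g -> ~ monochromatic c g) ->
  ~ ramsey_class C.
Proof.
move=> CA CB bad ramsey; have [E [CE E_ramsey]] := ramsey A B CA CB.
have [c c_bad] := bad E CE; have [g [g_emb g_mono]] := E_ramsey c.
exact: c_bad g g_emb g_mono.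
Qed.

End Embeddings.

Section Automorphisms.

Variables (L : language) (T1 T2 : Type) (I1 : structure L T1) (I2 : structure L T2).
Variable sigma : T1 -> T2.
Hypotheses (sigma_emb : is_emb I1 I2 sigma) (sigma_bij : bijective sigma).

Lemma sat_iso (p : formula L) (w1 : nat -> T1) (w2 : nat -> T2) :
  (forall m, w2 m = sigma (w1 m)) -> (sat I1 w1 p <-> sat I2 w2 p).
Proof.
have [sigma_inj sigma_rel] := sigma_emb; have [tau sigmaK tauK] := sigma_bij.
elim: p w1 w2 => [s vs|i j|p IH|p IHp q IHq|p IHp q IHq|n p IH|n p IH] w1 w2 w12 /=.
- have -> : (fun i => w2 (vs i)) = sigma \o (fun i => w1 (vs i)).
    by apply: functional_extensionality => i /=; rewrite w12.
  exact: sigma_rel.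
- by rewrite !w12; split => [->|/sigma_inj].
- by have := IH w1 w2 w12; tauto.
- by have := IHp w1 w2 w12; have := IHq w1 w2 w12; tauto.
- by have := IHp w1 w2 w12; have := IHq w1 w2 w12; tauto.
- split => [[x sat_x]|[x sat_x]].
  + exists (sigma x); apply: (IH _ _ _).1 sat_x => m; by case: (m == n).
  + exists (tau x); apply: (IH _ _ _).2 sat_x => m; by case: (m == n); rewrite ?tauK.
- split => [sat_all x|sat_all x].
  + apply: (IH (fun m => if m == n then tau x else w1 m) _ _).1 (sat_all _) => m.
    by case: (m == n); rewrite ?tauK.
  + apply: (IH _ (fun m => if m == n then sigma x else w2 m) _).2 (sat_all _) => m.
    by case: (m == n).
Qed.

Lemma defined_rel_iso (phi : formula L) (x y : T1) :
  defined_rel I1 phi x y <-> defined_rel I2 phi (sigma x) (sigma y).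
Proof. by apply: sat_iso => m; case: (m == 0). Qed.

End Automorphisms.

Section Orientation.

Variables (L : language) (TM : Type) (IM : structure L TM).
Variables (A0 : finstruct L) (phi : formula L).
Hypothesis hom : homogeneous IM.

Local Notation D := (defined_rel IM phi).

Lemma defined_rel_emb (e0 e : fcar A0 -> TM) (a a' : fcar A0) :
  is_emb (fint A0) IM e0 -> is_emb (fint A0) IM e ->
  D (e0 a) (e0 a') -> D (e a) (e a').
Proof.
move=> e0_emb e_emb; have [sigma [sigma_emb sigma_bij sigma_e0]] := hom e0_emb e_emb.
by rewrite -!sigma_e0; apply: (defined_rel_iso sigma_emb sigma_bij phi _ _).1.
Qed.

Hypothesis D_orient : forall x y, x <> y -> induces_copy IM A0 x y ->
  (D x y <-> ~ D y x).
Hypothesis D_copy : forall x y, D x y -> x <> y /\ induces_copy IM A0 x y.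

Variables (e0 : fcar A0 -> TM) (a0 a1 : fcar A0).
Hypotheses (e0_emb : is_emb (fint A0) IM e0) (e0_arc : D (e0 a0) (e0 a1)).

(* Every arc is a copy of the reference arc (e0 a0, e0 a1), with the same
   orientation: the reversed orientation would be transported back by an
   automorphism onto the reverse of the arc, contradicting antisymmetry. *)
Lemma arc_emb x y : D x y ->
  exists e : fcar A0 -> TM, [/\ is_emb (fint A0) IM e,
    forall a, e a = x \/ e a = y, e a0 = x & e a1 = y].
Proof.
move=> Dxy; have [x_neq_y xy_copy] := D_copy Dxy.
have [e [e_emb [e_xy _]]] := xy_copy.
have a01 : e a0 <> e a1.
  move/(proj1 e_emb) => a0_eq_a1; have [+ _] := D_copy e0_arc.
  by rewrite a0_eq_a1.
have ea0 : e a0 = x.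
  case: (e_xy a0) => // ea0; exfalso.
  have ea1 : e a1 = x by case: (e_xy a1) => // ea1; case: a01; rewrite ea0 ea1.
  have Dyx : D y x by rewrite -ea0 -ea1; apply: defined_rel_emb e0_emb e_emb e0_arc.
  exact: (D_orient x_neq_y xy_copy).1 Dxy Dyx.
exists e; split=> //.
by case: (e_xy a1) => // ea1; case: a01; rewrite ea0 ea1.
Qed.

End Orientation.

Section Cycle.

Variables (L : language) (TM : choiceType) (IM : structure L TM).
Variables (A0 : finstruct L) (a0 a1 : fcar A0).
Variables (k : nat) (i0 : 'I_k) (v : 'I_k -> TM).
Hypothesis v_step_neq : forall j : 'I_k, v j <> v (ordS j).
Hypothesis v_step_emb : forall j : 'I_k, exists e : fcar A0 -> TM,
  [/\ is_emb (fint A0) IM e, forall a, e a = v j \/ e a = v (ordS j),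
      e a0 = v j & e a1 = v (ordS j)].

Local Notation B := (induced IM (codom v)).

Definition cycle_vertex (j : 'I_k) : fcar B := SeqSub (codom_f v j).

Lemma cycle_not_monochromatic (E : finstruct L) (g : fcar B -> fcar E) :
  femb g -> ~ monochromatic (orient_colour a0 a1) g.
Proof.
move=> g_emb [col g_mono].
pose r j := nat_of_ord (enum_rank (g (cycle_vertex j))).
apply: (ordS_cycle_not_monotone i0 (r := r) (b := col)) => j.
- apply/eqP => /ord_inj /enum_rank_inj /(proj1 g_emb) /(congr1 val) /=.
  exact: v_step_neq.
- have [e [e_emb e_arc e_a0 e_a1]] := v_step_emb j.
  have e_v a : e a \in codom v by case: (e_arc a) => ->; apply: codom_f.
  pose l := induced_corestr IM e_v.
  have l_a0 : l a0 = cycle_vertex j by apply: val_inj; rewrite /= e_a0.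
  have l_a1 : l a1 = cycle_vertex (ordS j) by apply: val_inj; rewrite /= e_a1.
  have gl_emb : femb (g \o l).
    exact: is_emb_comp (induced_corestr_emb e_v e_emb) g_emb.
  have := g_mono (g \o l) gl_emb (fun a => ex_intro _ (l a) erefl).
  by rewrite /orient_colour /= l_a0 l_a1.
Qed.

End Cycle.

Theorem mainTheorem7 (L : language) (C : fclass L) (TM : countType)
  (IM : structure L TM) (A0 : finstruct L) (phi : formula L)
  (k : nat) (v : 'I_k -> TM) :
  fraisse_class C ->
  (forall A, C A -> rigid A) ->
  fraisse_limit IM C ->
  C A0 -> #|fcar A0| = 2 ->
  (forall x y, x <> y -> induces_copy IM A0 x y ->
     (defined_rel IM phi x y <-> ~ defined_rel IM phi y x)) ->
  (forall x y, defined_rel IM phi x y -> x <> y /\ induces_copy IM A0 x y) ->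
  (* v is a directed cycle of D *)
  2 <= k -> injective v ->
  (forall i : 'I_k, defined_rel IM phi (v i) (v (ordS i))) ->
  (forall E : finstruct L, C E ->
     exists c : (fcar A0 -> fcar E) -> bool,
       forall g : fcar (induced IM (codom v)) -> fcar E,
         femb g -> ~ monochromatic c g)
  /\ ~ ramsey_class C.
Proof.
move=> _ _ [hom age] CA0 _ D_orient D_copy k_ge2 _ v_cycle.
have i0 : 'I_k by exists 0; apply: leq_trans k_ge2.
have [_ [e0 [e0_emb [_ [[a0 e0_a0] [a1 e0_a1]]]]]] := D_copy _ _ (v_cycle i0).
have e0_arc : defined_rel IM phi (e0 a0) (e0 a1) by rewrite e0_a0 e0_a1.
have bad_colouring E : exists c : (fcar A0 -> fcar E) -> bool,
    forall g : fcar (induced IM (codom v)) -> fcar E,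
      femb g -> ~ monochromatic c g.
  exists (orient_colour a0 a1) => g.
  apply: (cycle_not_monochromatic i0) => j; first by have [] := D_copy _ _ (v_cycle j).
  exact: (arc_emb hom D_orient D_copy e0_emb e0_arc (v_cycle j)).
split=> [E _|]; first exact: bad_colouring.
apply: not_ramsey_class CA0 (induced_in_age age (codom_f v i0)) _ => E _.
exact: bad_colouring.
Qed.
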